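(* Let $\Delta$ be a metrizable Choquet simplex, $G$ a countable abelian group, and $\psi\colon G\to\mathrm{Aff}(\Delta)$ a homomorphism whose image contains the constant function $1$. Make $G$ a partially ordered group with positive cone $G_+=\{g\in G:\psi(g)(x)>0\text{ for all }x\in\Delta\}\cup\{0\}$, and take as order unit any $g_0\in G$ with $\psi(g_0)=1$. Then every state on $(G,G_+,g_0)$ (an order preserving homomorphism $\omega\colon G\to\mathbb{R}$ with $\omega(g_0)=1$) is of the form $g\mapsto\psi(g)(x)$ for some $x\in\Delta$.
   Context: $\mathrm{Aff}(\Delta)$ denotes the space of continuous affine real valued functions on $\Delta$. *)

From HB Require Import structures.
From mathcomp Require Import all_boot all_order all_algebra.
From mathcomp Require Import all_classical all_reals all_analysis.
Set Implicit Arguments. Unset Strict Implicit. Unset Printing Implicit Defensive.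
Import Order.TTheory GRing.Theory Num.Theory.
Import numFieldTopology.Exports numFieldNormedType.Exports.
Local Open Scope classical_set_scope.
Local Open Scope ring_scope.

Section Simplex.
Variables (R : realType) (E : tvsType R).

Definition convex_set (D : set E) : Prop :=
  forall x y t, D x -> D y -> 0 <= t <= 1 -> D (t *: x + (1 - t) *: y).

Definition metrizable_set (D : set E) : Prop :=
  exists d : E -> E -> R,
    [/\ (forall x y, D x -> D y -> 0 <= d x y),
        (forall x y, D x -> D y -> (d x y = 0 <-> x = y)),
        (forall x y, D x -> D y -> d x y = d y x),
        (forall x y z, D x -> D y -> D z -> d x z <= d x y + d y z) &
        (forall x (A : set E), D x ->
           ((exists V, nbhs x V /\ D `&` V `<=` A) <->
            (exists2 e : R, 0 < e & D `&` [set y | d x y < e] `<=` A)))].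

Definition cone_of (D : set E) : set (E * R) :=
  [set p | exists t x, [/\ 0 <= t, D x & p = (t *: x, t)]].

Definition cone_le (D : set E) (u v : E * R) : Prop :=
  cone_of D (v.1 - u.1, v.2 - u.2).

Definition cone_span (D : set E) : set (E * R) :=
  [set u | exists a b, [/\ cone_of D a, cone_of D b & u = (a.1 - b.1, a.2 - b.2)]].

(** Choquet simplex (Phelps, Lectures on Choquet's theorem, ch. 10):
    a nonempty compact convex subset of a locally convex Hausdorff space
    whose cone is a lattice cone, i.e. P - P is a lattice for the order
    induced by P (existence of suprema; infima follow). *)
Definition choquet_simplex (D : set E) : Prop :=
  [/\ hausdorff_space E, D !=set0, compact D, convex_set D &
      forall u v, cone_span D u -> cone_span D v ->
        exists w, [/\ cone_span D w, cone_le D u w, cone_le D v w &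
          forall z, cone_span D z -> cone_le D u z -> cone_le D v z ->
            cone_le D w z]].

Definition is_aff (D : set E) (f : E -> R) : Prop :=
  {within D, continuous f} /\
  forall x y t, D x -> D y -> 0 <= t <= 1 ->
    f (t *: x + (1 - t) *: y) = t * f x + (1 - t) * f y.

End Simplex.

Section OrderedGroup.
Variables (R : realType) (E : tvsType R) (G : zmodType).

Definition pos_cone (D : set E) (psi : G -> E -> R) : set G :=
  [set g | (forall x, D x -> 0 < psi g x) \/ g = 0].

Definition is_state (Gpos : set G) (g0 : G) (w : G -> R) : Prop :=
  [/\ (forall g h, w (g + h) = w g + w h),
      (forall g h, Gpos (h - g) -> w g <= w h) &
      w g0 = 1].

End OrderedGroup.

From Pilot Require Import Defs.
From HB Require Import structures.
From mathcomp Require Import all_boot all_order all_algebra.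
From mathcomp Require Import all_classical all_reals all_analysis.
From mathcomp Require Import ring lra.
Import Order.TTheory GRing.Theory Num.Theory.
Import numFieldTopology.Exports numFieldNormedType.Exports.
Set Implicit Arguments. Unset Strict Implicit. Unset Printing Implicit Defensive.
Local Open Scope classical_set_scope.
Local Open Scope ring_scope.

(* The state w is evaluation
   at a point iff the compact sets {x in D | w g <= psi g x} have a common
   point, so it suffices that finitely many of them meet.  For finitely many
   continuous affine functions on a compact convex set this follows, by a
   minimax argument, once every nonnegative combination h of the gaps
   psi g - w g is somewhere nonnegative.  If instead h < 0 on D, then
   N h <= -(C + 2) on D for a large integer N; rounding the coefficients of
   N h down to integers gives a single g' whose gap is within C of N h, so
   psi g' + 2 <= w g' on D, which is impossible for a state since
   psi g0 = 1 for the order unit g0. *)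

Section AdditiveMap.
Variables (U V : zmodType) (f : U -> V).
Hypothesis fD : forall g h, f (g + h) = f g + f h.

Lemma additive_map0 : f 0 = 0.
Proof. by apply: (addrI (f 0)); rewrite -fD !addr0. Qed.

Lemma additive_mapN g : f (- g) = - f g.
Proof. by apply: (addrI (f g)); rewrite -fD !subrr additive_map0. Qed.

Lemma additive_mapMz g z : f (g *~ z) = f g *~ z.
Proof.
have fMn n : f (g *+ n) = f g *+ n.
  by elim: n => [|n IH]; rewrite ?additive_map0 // !mulrS fD IH.
by case: z => n; rewrite ?NegzE ?mulrNz ?additive_mapN -pmulrn fMn pmulrn.
Qed.

End AdditiveMap.

Lemma compact_finI_ge (R : realType) (T : topologicalType) (I : choiceType)
    (D : set T) (f : I -> T -> R) (c : I -> R) :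
  compact D -> (forall i, {within D, continuous f i}) ->
  (forall l : seq I, exists2 x, D x & forall i, i \in l -> c i <= f i x) ->
  exists2 x, D x & forall i, c i <= f i x.
Proof.
move=> cD cf fin.
have [[i0 _]|noI] := pselect (exists i : I, True); last first.
  by have [x Dx _] := fin [::]; exists x => // i; case: noI; exists i.
pose P i := D `&` [set x | c i <= f i x].
have finP : finI setT P.
  move=> J _; have [x Dx hx] := fin (finmap.enum_fset J).
  by exists x => i /= iJ; split => //; exact: hx.
have PD : filter_from (finI_from setT P) id D.
  by exists (P i0); [exact: finI_from1 | move=> x []].
have [p [Dp clp]] := cD _ (finI_filter finP) PD.
exists p => // i; rewrite leNgt; apply/negP => lt.
have near_lt : within D (nbhs p) (f i @^-1` [set y | y < c i]).
  by move/subspace_continuousP: (cf i) => /(_ p Dp); apply; exact: lt_nbhsl.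
have Pi : filter_from (finI_from setT P) id (P i).
  by exists (P i); [exact: finI_from1 |].
have [y [[Dy hy] near_y]] := clp _ _ Pi near_lt.
by move: (near_y Dy) => /=; rewrite ltNge hy.
Qed.

Section AffineFunctions.
Variables (R : realType) (E : tvsType R) (D : set E).

Lemma is_aff_cst c : is_aff D (fun _ => c).
Proof. by split; [move=> x; exact: cvg_cst | move=> *; ring]. Qed.

Lemma is_aff_lincomb (f g : E -> R) al be : is_aff D f -> is_aff D g ->
  is_aff D (fun x => al * f x + be * g x).
Proof.
move=> [cf af] [cg ag]; split.
  move=> x; apply: cvgD; apply: cvgM;
  [exact: cvg_cst | exact: cf | exact: cvg_cst | exact: cg].
by move=> x y t Dx Dy t01; rewrite af // ag //; ring.
Qed.

Lemma compact_setI_ge (K : set E) (f : E -> R) (c : R) :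
  K `<=` D -> compact K -> {within D, continuous f} ->
  compact (K `&` [set x | c <= f x]).
Proof.
move=> KD cK cf.
have cKD : compact (K `&` D : set (subspace D)).
  by apply/compact_subspaceIP; rewrite setIidl.
have cl : closed ([set x | c <= f x] : set (subspace D)).
  apply: (@preimage_closed (subspace D) R f [set y | c <= y]);
    last exact: closed_ge.
  by move=> x _; apply: cf.
have := compact_closedI cKD cl.
rewrite setIAC => /compact_subspaceIP.
by rewrite setIidl // => x [] /KD.
Qed.

Lemma convex_setI_ge0 (K : set E) (f : E -> R) :
  K `<=` D -> Defs.convex_set K -> is_aff D f ->
  Defs.convex_set (K `&` [set x | 0 <= f x]).
Proof.
move=> KD vK [_ af] x y t [Kx fx] [Ky fy] t01; split; first exact: vK.
rewrite /= (af _ _ _ (KD _ Kx) (KD _ Ky) t01); case/andP: t01 => t0 t1.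
by rewrite addr_ge0 // mulr_ge0 // subr_ge0.
Qed.

Section Separation.
Variables (K : set E) (a b : E -> R).
Hypotheses (KD : K `<=` D) (cK : compact K) (vK : Defs.convex_set K)
  (fa : is_aff D a) (fb : is_aff D b)
  (ab_disj : forall x, K x -> 0 <= a x -> b x < 0).

(* On the segment from c to x, b vanishes at a point where a must be < 0. *)
Lemma aff_cross_lt c x : K c -> K x -> b c < 0 -> 0 < b x ->
  b x * a c < b c * a x.
Proof.
move=> Kc Kx bc bx; case: fa fb => _ aa [_ ab].
pose d := b x - b c; have d0 : 0 < d by rewrite /d subr_gt0 (lt_trans bc).
pose t := b x / d.
have t01 : 0 <= t <= 1.
  apply/andP; split; first by rewrite /t divr_ge0 // ltW.
  by rewrite /t ler_pdivrMr // mul1r /d; lra.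
have Kz := vK Kc Kx t01.
have [Dc Dx] := (KD Kc, KD Kx).
have bz : b (t *: c + (1 - t) *: x) = 0.
  by rewrite ab // /t /d; field; rewrite -/d gt_eqF.
have : a (t *: c + (1 - t) *: x) < 0.
  by rewrite ltNge; apply/negP => /(ab_disj Kz); rewrite bz ltxx.
have -> : b x * a c = (t * a c + (1 - t) * a x) * d + b c * a x.
  by rewrite /t /d; field; rewrite -/d gt_eqF.
rewrite aa // => az.
suff : (t * a c + (1 - t) * a x) * d < 0 by lra.
by rewrite pmulr_llt0.
Qed.

Lemma aff_separation : exists2 s, 0 <= s & forall x, K x ->
  a x + s * b x <= 0 /\ (a x < 0 -> a x + s * b x < 0).
Proof.
have [[x0 [Kx0 ax0]]|noA] := pselect (exists x, K x /\ 0 <= a x); last first.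
  exists 0 => // x Kx; rewrite mul0r addr0.
  have ax : a x < 0 by rewrite ltNge; apply/negP => ax; apply: noA; exists x.
  by split => //; exact: ltW.
pose A := K `&` [set x | 0 <= a x].
have AD : A `<=` D by move=> x [/KD].
have cA : compact A by apply: compact_setI_ge => //; case: fa.
pose r x := a x / - b x.
have cr : {within A, continuous r}.
  rewrite continuous_subspace_in => x; rewrite inE => -[Kx ax].
  apply: cvgM; first exact: (continuous_subspaceW AD fa.1).
  apply: cvgV; first by rewrite oppr_eq0 lt_eqF // (ab_disj Kx).
  by apply: cvgN; exact: (continuous_subspaceW AD fb.1).
have [c Ac rmax] := compact_EVT_max (ex_intro _ x0 (conj Kx0 ax0)) cA cr.
move: (Ac); rewrite inE => -[Kc ac].
have bc := ab_disj Kc ac.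
exists (r c); first by rewrite /r divr_ge0 // ltW // oppr_gt0.
move=> x Kx; have [ax|ax] := leP 0 (a x).
  have : r x <= r c by apply: rmax; rewrite inE.
  rewrite /r ler_pdivrMr ?oppr_gt0 ?ab_disj // mulrN => h.
  by split => //; lra.
suff lt0 : a x + r c * b x < 0 by split => //; exact: ltW.
have [bx|bx] := leP (b x) 0.
  by rewrite -(addr0 0) ltr_leD // mulr_ge0_le0 // divr_ge0 // ltW // oppr_gt0.
have -> : a x + r c * b x = (b x * a c - b c * a x) / - b c.
  by rewrite /r; field; rewrite lt_eqF.
by rewrite pmulr_llt0 ?invr_gt0 ?oppr_gt0 // subr_lt0 aff_cross_lt.
Qed.

End Separation.

Lemma aff_pair_nonneg (K : set E) (a b : E -> R) :
  K `<=` D -> compact K -> Defs.convex_set K -> is_aff D a -> is_aff D b ->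
  (forall al be, 0 <= al -> 0 <= be ->
     exists2 x, K x & 0 <= al * a x + be * b x) ->
  exists2 x, K x & 0 <= a x /\ 0 <= b x.
Proof.
move=> KD cK vK fa fb comb.
have [//|none] := pselect (exists2 x, K x & 0 <= a x /\ 0 <= b x).
have ab x : K x -> 0 <= a x -> b x < 0.
  by move=> Kx ax; rewrite ltNge; apply/negP => bx; apply: none; exists x.
have ba x : K x -> 0 <= b x -> a x < 0.
  by move=> Kx bx; rewrite ltNge; apply/negP => ax; apply: none; exists x.
have [s s0 hs] := aff_separation KD cK vK fa fb ab.
have [t t0 ht] := aff_separation KD cK vK fb fa ba.
have [x Kx hx] := comb (1 + t) (1 + s) (addr_ge0 ler01 t0) (addr_ge0 ler01 s0).
have [[h1 e1] [h2 e2]] := (hs x Kx, ht x Kx).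
exfalso; have [ax|ax] := ltP (a x) 0; first by have := e1 ax; lra.
by have := e2 (ab x Kx ax); lra.
Qed.

Fixpoint conic_comb (s : seq (E -> R)) (h : E -> R) : Prop :=
  if s is a :: s' then
    exists2 mu, 0 <= mu &
      exists2 h', conic_comb s' h' & h = (fun x => mu * a x + h' x)
  else h = (fun _ => 0).

Fixpoint all_aff (s : seq (E -> R)) : Prop :=
  if s is a :: s' then is_aff D a /\ all_aff s' else True.

Fixpoint all_nonneg_at (x : E) (s : seq (E -> R)) : Prop :=
  if s is a :: s' then 0 <= a x /\ all_nonneg_at x s' else True.

Lemma conic_combZ s h al : 0 <= al -> conic_comb s h ->
  conic_comb s (fun x => al * h x).
Proof.
elim: s h => [|a s IH] h al0 /=; first by move=> ->; rewrite mulr0.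
move=> [mu mu0 [h' ch' ->]]; exists (al * mu); first exact: mulr_ge0.
exists (fun x => al * h' x); first exact: IH.
by apply: funext => x; rewrite mulrDr mulrA.
Qed.

Lemma conic_comb_aff s h : all_aff s -> conic_comb s h -> is_aff D h.
Proof.
elim: s h => [|a s IH] h /=; first by move=> _ ->; exact: is_aff_cst.
move=> [fa fs] [mu _ [h' ch' ->]].
have := is_aff_lincomb mu 1 fa (IH _ fs ch').
by congr is_aff; apply: funext => x; rewrite mul1r.
Qed.

(* A minimax theorem for finitely many continuous affine functions: induct on
   the list, restricting K to the set where the head function is nonnegative. *)
Lemma conic_comb_common_nonneg s : forall K, K `<=` D -> compact K ->
  Defs.convex_set K -> all_aff s ->
  (forall h, conic_comb s h -> exists2 x, K x & 0 <= h x) ->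
  exists2 x, K x & all_nonneg_at x s.
Proof.
elim: s => [|a s IH] K KD cK vK /=.
  by move=> _ /(_ _ erefl) [x Kx _]; exists x.
move=> [fa fs] comb.
pose K' := K `&` [set x | 0 <= a x].
have K'D : K' `<=` D by move=> x [/KD].
have cK' : compact K' by apply: compact_setI_ge => //; case: fa.
have [x [Kx ax] sx] : exists2 x, K' x & all_nonneg_at x s.
  apply: IH => //; first exact: convex_setI_ge0.
  move=> h ch; have [x Kx [hx ax]] : exists2 x, K x & 0 <= h x /\ 0 <= a x.
    apply: aff_pair_nonneg KD cK vK (conic_comb_aff fs ch) fa _.
    move=> al be al0 be0.
    have [x Kx hx] := comb (fun x => be * a x + al * h x)
      (ex_intro2 _ _ be be0 (ex_intro2 _ _ _ (conic_combZ al0 ch) erefl)).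
    by exists x => //; rewrite addrC.
  by exists x.
by exists x.
Qed.

End AffineFunctions.

Section States.
Variables (R : realType) (E : tvsType R) (D : set E).
Variables (G : zmodType) (psi : G -> E -> R) (w : G -> R) (g0 : G).
Hypotheses (cD : compact D) (vD : Defs.convex_set D) (nD : D !=set0)
  (psi_aff : forall g, is_aff D (psi g))
  (psiD : forall g h x, D x -> psi (g + h) x = psi g x + psi h x)
  (psi_g0 : forall x, D x -> psi g0 x = 1)
  (wD : forall g h, w (g + h) = w g + w h)
  (w_ge : forall g h, pos_cone D psi (h - g) -> w g <= w h)
  (w_g0 : w g0 = 1).

Lemma psiN g x : D x -> psi (- g) x = - psi g x.
Proof.
by move=> Dx; apply: (additive_mapN (f := psi^~ x)) => g1 g2; exact: psiD.
Qed.

Lemma psiMz g z x : D x -> psi (g *~ z) x = z%:~R * psi g x.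
Proof.
move=> Dx; rewrite mulrzl.
by apply: (additive_mapMz (f := psi^~ x)) => g1 g2; exact: psiD.
Qed.

Lemma wMz g z : w (g *~ z) = z%:~R * w g.
Proof. by rewrite mulrzl; exact: additive_mapMz. Qed.

(* Compare g with the multiple floor (w g - 1) of the order unit. *)
Lemma state_not_above g : ~ (forall x, D x -> psi g x + 2 <= w g).
Proof.
move=> above; pose r := Num.floor (w g - 1).
have r1 : r%:~R <= w g - 1 := floor_le _.
have r2 : w g - 1 < (r + 1)%:~R := floorD1_gt _.
rewrite rmorphD /= in r2.
have : w g <= w (g0 *~ r).
  apply: w_ge; left => x Dx.
  rewrite psiD // psiN // psiMz // psi_g0 // mulr1.
  by have := above x Dx; lra.
by rewrite wMz w_g0 mulr1; lra.
Qed.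

Definition state_gap g x := psi g x - w g.

Lemma all_aff_state_gap l : all_aff D (map state_gap l).
Proof.
elim: l => [|g l IH] //=; split => //.
have := is_aff_lincomb 1 (- w g) (psi_aff g) (is_aff_cst D 1).
by congr is_aff; apply: funext => x; rewrite /state_gap mul1r mulr1.
Qed.

Lemma state_gap_bounded g : exists B, forall x, D x -> `|state_gap g x| <= B.
Proof.
have cg : {within D, continuous psi g} := (psi_aff g).1.
have [c1 _ max1] := compact_EVT_max nD cD cg.
have [c2 _ min2] := compact_EVT_min nD cD cg.
exists (`|psi g c1 - w g| + `|psi g c2 - w g|) => x Dx.
have := max1 x (mem_set Dx); have := min2 x (mem_set Dx).
have n1 := ler_norm (psi g c1 - w g).
have n2 := ler_norm (- (psi g c2 - w g)); rewrite normrN in n2.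
have p1 := normr_ge0 (psi g c1 - w g); have p2 := normr_ge0 (psi g c2 - w g).
by rewrite /state_gap ler_norml => a1 a2; apply/andP; split; lra.
Qed.

Lemma conic_comb_state_gap_approx l h : conic_comb (map state_gap l) h ->
  exists C, forall N : nat, exists g,
    forall x, D x -> `|N%:R * h x - state_gap g x| <= C.
Proof.
elim: l h => [|a l IH] h /=.
  move=> ->; exists 0 => N; exists 0 => x Dx.
  rewrite /state_gap (additive_map0 wD) (additive_map0 (f := psi^~ x)).
    by rewrite mulr0 !subrr normr0.
  by move=> g1 g2; exact: psiD.
move=> [mu mu0 [h' ch' ->]].
have [C' HC'] := IH _ ch'; have [B HB] := state_gap_bounded a.
exists (B + C') => N.
pose p := Num.floor (N%:R * mu).
have p1 : p%:~R <= N%:R * mu := floor_le _.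
have p2 : N%:R * mu < (p + 1)%:~R := floorD1_gt _.
rewrite rmorphD /= in p2.
have [g Hg] := HC' N; exists (a *~ p + g) => x Dx.
have -> : N%:R * (mu * state_gap a x + h' x) - state_gap (a *~ p + g) x =
    (N%:R * mu - p%:~R) * state_gap a x + (N%:R * h' x - state_gap g x).
  by rewrite /state_gap psiD // wD psiMz // wMz; ring.
apply: (le_trans (ler_normD _ _)); apply: lerD; last exact: Hg.
rewrite normrM -[B]mul1r; apply: ler_pM => //; last exact: HB.
by rewrite ger0_norm; lra.
Qed.

Lemma conic_comb_state_gap_nonneg l h : conic_comb (map state_gap l) h ->
  exists2 x, D x & 0 <= h x.
Proof.
move=> ch; have [//|none] := pselect (exists2 x, D x & 0 <= h x); exfalso.
have hneg x : D x -> h x < 0.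
  by move=> Dx; rewrite ltNge; apply/negP => hx; apply: none; exists x.
have [c /[1!inE] Dc hmax] :=
  compact_EVT_max nD cD (conic_comb_aff (all_aff_state_gap l) ch).1.
have hc := hneg c Dc.
have [C HC] := conic_comb_state_gap_approx ch.
have C0 : 0 <= C by have [g /(_ c Dc)] := HC 0%N; apply: le_trans.
pose N := Num.bound ((C + 2) / - h c).
have : (C + 2) / - h c < N%:R by apply: archi_boundP; rewrite divr_ge0 //; lra.
rewrite ltr_pdivrMr ?oppr_gt0 // => hN.
have [g Hg] := HC N; apply: (@state_not_above g) => x Dx.
have := Hg x Dx; rewrite ler_norml => /andP[e _].
have : N%:R * h x <= N%:R * h c by rewrite ler_wpM2l // hmax // inE.
by move: e hN; rewrite /state_gap mulrN; lra.
Qed.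

Lemma state_le_psi_finite (l : seq G) :
  exists2 x, D x & forall g, g \in l -> w g <= psi g x.
Proof.
have [x Dx sx] := conic_comb_common_nonneg (@subset_refl _ D) cD vD
  (all_aff_state_gap l) (fun h => @conic_comb_state_gap_nonneg l h).
exists x => //; elim: l sx => [|a l IH] //= [ax sx] g.
by rewrite in_cons => /orP[/eqP -> | /(IH sx)//]; rewrite -subr_ge0.
Qed.

End States.

Theorem lemma5p2 (R : realType) (E : tvsType R) (D : set E)
  (G : countZmodType) (psi : G -> E -> R) :
  choquet_simplex D -> metrizable_set D ->
  (forall g, is_aff D (psi g)) ->
  (forall g h x, D x -> psi (g + h) x = psi g x + psi h x) ->
  (exists g1, forall x, D x -> psi g1 x = 1) ->
  forall g0 : G, (forall x, D x -> psi g0 x = 1) ->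
  forall w : G -> R, is_state (pos_cone D psi) g0 w ->
  exists2 x, D x & forall g, w g = psi g x.
Proof.
move=> [_ nD cD vD _] _ psi_aff psiD _ g0 psi_g0 w [wD w_ge w_g0].
have [x Dx le_wx] := compact_finI_ge (c := w) cD (fun g => (psi_aff g).1)
  (state_le_psi_finite cD vD nD psi_aff psiD psi_g0 wD w_ge w_g0).
exists x => // g; apply/eqP; rewrite eq_le le_wx /=.
by rewrite -lerN2 -(psiN psiD) // -(additive_mapN wD).
Qed.
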